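(* Let $L$ and $K$ be finite-dimensional Lie superalgebras over a field $\mathbb{F}$ of characteristic different from $2$ and $3$, with $\dim L=\dim K$. Then $L$ and $K$ are isoclinic if and only if $L\cong K$.
   Context: A Lie superalgebra is a $\mathbb{Z}_2$-graded vector space $L=L_{\bar 0}\oplus L_{\bar 1}$ with a bilinear bracket satisfying $[L_\alpha,L_\beta]\subseteq L_{\alpha+\beta}$, graded skew-symmetry and the graded Jacobi identity. Homomorphisms are even (degree-preserving) linear maps preserving the bracket. $Z(L)=\{z\in L:[z,x]=0\ \forall x\in L\}$ is the center and $L'=[L,L]$ the derived superalgebra. Lie superalgebras $L$ and $M$ are isoclinic, written $L\sim M$, if there are Lie superalgebra isomorphisms $\varphi:L/Z(L)\to M/Z(M)$ and $\theta:L'\to M'$ such that $\theta([l,m])=[k,r]$ for all $l,m\in L$ and all $k,r\in M$ with $k+Z(M)=\varphi(l+Z(L))$ and $r+Z(M)=\varphi(m+Z(L))$. Dimension means superdimension $(\dim L_{\bar0}\mid\dim L_{\bar1})$. *)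

From HB Require Import structures.
From mathcomp Require Import all_boot all_order all_algebra.
Set Implicit Arguments. Unset Strict Implicit. Unset Printing Implicit Defensive.
Import GRing.Theory.
Local Open Scope ring_scope.

(* The carrier is a finite-dimensional F-vector space L (vectType F);
   the Z_2-grading is g : bool -> {vspace L}  (false = even, true = odd);
   the bracket is br : L -> L -> L. *)

Definition psign (F : fieldType) (a b : bool) : F := if a && b then -1 else 1.

Definition lie_superalgebra (F : fieldType) (L : vectType F)
    (g : bool -> {vspace L}) (br : L -> L -> L) : Prop :=
  [/\
      (g false + g true)%VS = fullv /\ directv (g false + g true),
      (forall (a : F) (x y z : L), br (a *: x + y) z = a *: br x z + br y z)
      /\ (forall (a : F) (x y z : L), br z (a *: x + y) = a *: br z x + br z y),
      (forall (a b : bool) (x y : L), x \in g a -> y \in g b ->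
          br x y \in g (addb a b)),
      (forall (a b : bool) (x y : L), x \in g a -> y \in g b ->
          br x y = - (psign F a b *: br y x)) &
      (forall (a b c : bool) (x y z : L), x \in g a -> y \in g b -> z \in g c ->
          psign F a c *: br x (br y z) + psign F b a *: br y (br z x)
          + psign F c b *: br z (br x y) = 0)].

Definition lin (F : fieldType) (L M : vectType F) (f : L -> M) : Prop :=
  forall (a : F) (x y : L), f (a *: x + y) = a *: f x + f y.

Definition ls_isomorphic (F : fieldType) (L M : vectType F)
    (gL : bool -> {vspace L}) (brL : L -> L -> L)
    (gM : bool -> {vspace M}) (brM : M -> M -> M) : Prop :=
  exists f : L -> M,
    [/\ lin f, bijective f,
        (forall (b : bool) (x : L), x \in gL b -> f x \in gM b) &
        (forall x y : L, f (brL x y) = brM (f x) (f y))].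

Definition in_center (F : fieldType) (L : vectType F) (br : L -> L -> L) (z : L) : Prop :=
  forall x : L, br z x = 0.

Definition in_derived (F : fieldType) (L : vectType F) (br : L -> L -> L) (x : L) : Prop :=
  exists s : seq (L * L), x \in <<[seq br p.1 p.2 | p <- s]>>%VS.

(* The isomorphism  varphi : L/Z(L) -> M/Z(M)  is encoded by a linear
   lift phi : L -> M (x + Z(L) |-> phi x + Z(M)); the isomorphism theta : L' -> M'
   by a linear map theta : L -> M whose restriction to L' is considered. *)
Definition isoclinic (F : fieldType) (L M : vectType F)
    (gL : bool -> {vspace L}) (brL : L -> L -> L)
    (gM : bool -> {vspace M}) (brM : M -> M -> M) : Prop :=
  exists (phi theta : L -> M),
    [/\ (* varphi is a well-defined injective linear map L/Z(L) -> M/Z(M) *)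
        lin phi /\ (forall x : L, in_center brM (phi x) <-> in_center brL x),
        (forall m : M, exists x : L, in_center brM (m - phi x))
        /\ (* varphi is even: (L/Z(L))_b = (L_b + Z(L))/Z(L) is sent into (M_b + Z(M))/Z(M) *)
        (forall (b : bool) (x : L), x \in gL b ->
           exists z : M, in_center brM z /\ phi x - z \in gM b),
        (forall x y : L, in_center brM (phi (brL x y) - brM (phi x) (phi y)))
        /\
        [/\ lin theta,
            (forall x : L, in_derived brL x -> in_derived brM (theta x)),
            (forall x : L, in_derived brL x -> theta x = 0 -> x = 0) &
            (forall m : M, in_derived brM m ->
               exists x : L, in_derived brL x /\ theta x = m)],
        (forall (b : bool) (x : L), in_derived brL x -> x \in gL b -> theta x \in gM b)
        /\
        (forall x y : L, in_derived brL x -> in_derived brL y ->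
           theta (brL x y) = brM (theta x) (theta y)) &
        (forall (l m : L) (k r : M),
           in_center brM (k - phi l) -> in_center brM (r - phi m) ->
           theta (brL l m) = brM k r)].

From HB Require Import structures.
From mathcomp Require Import all_boot all_algebra zify.
From Stdlib Require Import Classical FunctionalExtensionality Lia.
Set Implicit Arguments. Unset Strict Implicit. Unset Printing Implicit Defensive.
Import GRing.Theory.
Local Open Scope ring_scope.

(* An isomorphism f gives an isoclinism with varphi and theta both induced by f.
   Conversely, given an isoclinism (varphi, theta), it suffices to build an even
   injective linear map f : L -> K that agrees with theta on L' and lifts varphi
   (f x - varphi x central): then f [x, y] = theta [x, y] = [f x, f y] by the
   compatibility of varphi and theta, and f is bijective because the
   superdimensions agree.  On each homogeneous part L_b, f is glued from three
   pieces: the b-component of varphi on a complement of Z(L)_b + L'_b, theta on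
   L'_b, and an injection of a complement of Z(L)_b ∩ L' in Z(L)_b into a
   complement of Z(K)_b ∩ K' in Z(K)_b.  The injection exists because
   dim Z(L)_b <= dim Z(K)_b (varphi maps L_b onto K_b modulo Z(K), and
   dim L_b = dim K_b) while theta maps Z(L)_b ∩ L' onto Z(K)_b ∩ K'. *)

Section LinearAlgebra.
Variables (F : fieldType) (L M : vectType F).

Lemma vspace_of_pred (P : L -> Prop) :
  P 0 -> (forall (a : F) x y, P x -> P y -> P (a *: x + y)) ->
  exists U : {vspace L}, forall x, x \in U <-> P x.
Proof.
move=> P0 Plin; apply: NNPP => noU.
suff grow n : exists U : {vspace L}, (forall x, x \in U -> P x) /\ (n <= \dim U)%N.
  have [U [_]] := grow (\dim (fullv : {vspace L})).+1.
  by rewrite ltnNge dimvS ?subvf.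
elim: n => [|n [U [UP leUn]]].
  by exists 0%VS; split=> // x; rewrite memv0 => /eqP ->.
have [x [Px xU]] : exists x, P x /\ x \notin U.
  apply: NNPP => noX; apply: noU; exists U => x; split; first exact: UP.
  by move=> Px; apply: NNPP => xU; apply: noX; exists x; split; last apply/negP.
exists (U + <[x]>)%VS; split.
  move=> _ /memv_addP [u uU [_ /vlineP [a ->] ->]].
  by rewrite addrC; apply: Plin => //; apply: UP.
apply: leq_ltn_trans leUn _; rewrite (ltn_leqif (dimv_leqif_sup (addvSl U _))).
by apply: contra xU => /subvP; apply; rewrite (subvP (addvSr U _)) ?memv_line.
Qed.

Lemma lin_lfun (f : L -> M) : lin f -> exists h : 'Hom(L, M), f = h.
Proof.
move=> linf.
pose fL : {linear L -> M} := HB.pack f (GRing.isLinear.Build _ _ _ _ f linf).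
by exists (linfun fL); apply: functional_extensionality => x; rewrite lfunE.
Qed.

Lemma daddv_pi_eq0 (U V : {vspace L}) v :
  (U :&: V = 0)%VS -> v \in V -> daddv_pi U V v = 0.
Proof.
move=> UV0 vV; have := daddv_pi_add UV0 (memv_add (mem0v U) vV).
have VU0 : (V :&: U = 0)%VS by rewrite capvC.
by rewrite add0r (daddv_pi_id VU0 vV) => /(canRL (addrK v)); rewrite subrr.
Qed.

Lemma lfun_glue (U V : {vspace L}) (f g : 'Hom(L, M)) :
  (U :&: V = 0)%VS -> exists h : 'Hom(L, M), {in U, h =1 f} /\ {in V, h =1 g}.
Proof.
move=> UV0; have VU0 : (V :&: U = 0)%VS by rewrite capvC.
exists ((f \o daddv_pi U V) + (g \o daddv_pi V U))%VF.
split=> x x_in; rewrite add_lfunE !comp_lfunE.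
  by rewrite (daddv_pi_id UV0 x_in) (daddv_pi_eq0 VU0 x_in) linear0 addr0.
by rewrite (daddv_pi_eq0 UV0 x_in) (daddv_pi_id VU0 x_in) linear0 add0r.
Qed.

Lemma exists_lfun_inj (A : {vspace L}) (C : {vspace M}) :
  (\dim A <= \dim C)%N ->
  exists g : 'Hom(L, M), (g @: A <= C)%VS /\ (A :&: lker g = 0)%VS.
Proof.
move=> leAC; pose X := vbasis A; pose fX := take (\dim A) (vbasis C).
have [h hX] := linear_of_free X fX.
have freefX : free fX.
  apply: (@catl_free _ _ (drop (\dim A) (vbasis C))).
  by rewrite cat_take_drop; apply: basis_free (vbasisP C).
have sizefX : size fX = size X by rewrite size_takel ?size_tuple.
have imgA : (linfun h @: A = <<fX>>)%VS.
  rewrite -(span_basis (vbasisP A)) limg_span -/X.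
  rewrite -(hX (basis_free (vbasisP A)) sizefX).
  by congr <<_>>%VS; apply: eq_map => x; rewrite lfunE.
exists (linfun h); split.
  by rewrite imgA; apply/span_subvP => y /mem_take /vbasis_mem.
apply/eqP; rewrite -dimv_eq0; have := limg_ker_dim (linfun h) A.
rewrite imgA (eqnP freefX) sizefX size_tuple.
by move=> dimAE; rewrite -(eqn_add2r (\dim A)) dimAE add0n.
Qed.

Lemma dimv_limg_add_le (f : 'Hom(L, M)) (Y Z : {vspace L}) (C : {vspace M}) :
  (Z <= Y)%VS -> (f @: Z <= C)%VS ->
  (\dim (f @: Y + C) + \dim Z <= \dim Y + \dim C)%N.
Proof.
move=> ZY fZC; have YZ : (Y :\: Z + Z)%VS = Y by rewrite addv_diff; apply/addv_idPl.
have -> : (f @: Y + C = f @: (Y :\: Z) + C)%VS.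
  by rewrite -{1}YZ limgD -addvA (addv_idPr fZC).
rewrite -(dimv_cap_compl Y Z) (capv_idPr ZY).
have := (dimv_add_leqif (f @: (Y :\: Z)) C).1; have := limg_ker_dim f (Y :\: Z).
lia.
Qed.

Lemma lker0_bijective (f : 'Hom(L, M)) :
  \dim (fullv : {vspace L}) = \dim (fullv : {vspace M}) -> lker f == 0%VS ->
  bijective f.
Proof.
move=> dimLM kerf0; have imf : limg f = fullv.
  apply/eqP; rewrite eqEdim subvf /= limg_dim_eq -?dimLM //.
  by rewrite capfv; apply/eqP.
exists (f^-1)%VF; first exact: lker0_lfunK.
by move=> y; apply: limg_lfunVK; rewrite imf memvf.
Qed.

End LinearAlgebra.

Section LieSuperalgebra.
Variables (F : fieldType) (L : vectType F) (g : bool -> {vspace L}) (br : L -> L -> L).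
Hypothesis hL : lie_superalgebra g br.

Local Notation central := (in_center br).
Local Notation derived := (in_derived br).

Definition gproj b := daddv_pi (g b) (g (~~ b)).

Lemma grade_cap b : (g b :&: g (~~ b) = 0)%VS.
Proof. by case: hL => [[_ /directv_addP]]; case: b => //= gcap; rewrite capvC. Qed.

Lemma grade_add b : (g b + g (~~ b))%VS = fullv.
Proof. by case: hL => [[gfull _]]; case: b => //=; rewrite addvC. Qed.

Lemma dimvf_grade : \dim (fullv : {vspace L}) = (\dim (g false) + \dim (g true))%N.
Proof. by rewrite -(grade_add false) dimv_disjoint_sum // (grade_cap false). Qed.

Lemma gproj_mem b x : gproj b x \in g b.
Proof. exact: memv_pi. Qed.

Lemma gproj_add b x : gproj b x + gproj (~~ b) x = x.
Proof.
by rewrite /gproj negbK; apply: daddv_pi_add (grade_cap b) _; rewrite grade_add memvf.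
Qed.

Lemma gproj_id b x : x \in g b -> gproj b x = x.
Proof. exact/daddv_pi_id/grade_cap. Qed.

Lemma gproj_eq0 b x : x \in g (~~ b) -> gproj b x = 0.
Proof. exact/daddv_pi_eq0/grade_cap. Qed.

Lemma gproj_homog b c x : x \in g c -> gproj b x = if b == c then x else 0.
Proof.
by case: b; case: c => /= xc;
  [rewrite gproj_id | rewrite gproj_eq0 | rewrite gproj_eq0 | rewrite gproj_id].
Qed.

Lemma grade_add_eq0 b u v : u \in g b -> v \in g (~~ b) -> u + v = 0 -> u = 0.
Proof.
move=> ub vb' /(congr1 (gproj b)).
by rewrite linearD /= (gproj_id ub) (gproj_eq0 vb') addr0 linear0.
Qed.

Lemma brDl x y z : br (x + y) z = br x z + br y z.
Proof. by case: hL => [_ [brlin _] _ _ _]; rewrite -{1}[x]scale1r brlin scale1r. Qed.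

Lemma brDr x y z : br z (x + y) = br z x + br z y.
Proof. by case: hL => [_ [_ brlin] _ _ _]; rewrite -{1}[x]scale1r brlin scale1r. Qed.

Lemma central0 : central 0.
Proof. by move=> y; apply: (@addIr _ (br 0 y)); rewrite -brDl !add0r. Qed.

Lemma brZl a x y : br (a *: x) y = a *: br x y.
Proof.
by case: hL => [_ [brlin _] _ _ _]; rewrite -[a *: x]addr0 brlin (central0 y) addr0.
Qed.

Lemma br_grade a c x y : x \in g a -> y \in g c -> br x y \in g (addb a c).
Proof. by case: hL => [_ _ brg _ _]; apply: brg. Qed.

Lemma central_lin a x y : central x -> central y -> central (a *: x + y).
Proof. by move=> cx cy z; rewrite brDl brZl cx cy scaler0 addr0. Qed.

Lemma central_gproj b z : central z -> central (gproj b z).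
Proof.
move=> cz y; have homog a c : br (gproj a z) (gproj c y) = 0.
  apply: (@grade_add_eq0 (addb a c) _ (br (gproj (~~ a) z) (gproj c y))).
  - exact: br_grade (gproj_mem a z) (gproj_mem c y).
  - by rewrite -addNb; apply: br_grade; apply: gproj_mem.
  - by rewrite -brDl gproj_add.
by rewrite -(gproj_add false y) brDr !homog addr0.
Qed.

Lemma br_centralr z x : central z -> br x z = 0.
Proof.
move=> cz; have homog a c : br (gproj c x) (gproj a z) = 0.
  case: hL => [_ _ _ skew _].
  by rewrite (skew c a) ?gproj_mem // (central_gproj a cz) scaler0 oppr0.
by rewrite -(gproj_add false x) -(gproj_add false z) brDl !brDr !homog !addr0.
Qed.

Lemma derived_br x y : derived (br x y).
Proof. by exists [:: (x, y)]; apply: memv_span1. Qed.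

Lemma derived0 : derived 0.
Proof. by exists [::]; rewrite span_nil mem0v. Qed.

Lemma derived_lin a x y : derived x -> derived y -> derived (a *: x + y).
Proof.
move=> [s xs] [t yt]; exists (s ++ t).
by rewrite map_cat span_cat memv_add ?memvZ.
Qed.

Lemma derived_gproj b x : derived x -> derived (gproj b x).
Proof.
have [D DP] := vspace_of_pred derived0 derived_lin.
move=> [s xs]; apply/DP; rewrite memv_preim; move: x xs; apply/subvP/span_subvP.
move=> _ /mapP [[u v] _ ->] /=; rewrite -memv_preim.
have homog a c : gproj b (br (gproj a u) (gproj c v)) \in D.
  apply/DP; rewrite (gproj_homog b (br_grade (gproj_mem a u) (gproj_mem c v))).
  by case: ifP => _; [apply: derived_br | apply: derived0].
rewrite -(gproj_add false u) -(gproj_add false v) brDl !brDr !linearD /=.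
by rewrite !memvD.
Qed.

End LieSuperalgebra.

Lemma in_derived_morph (F : fieldType) (L M : vectType F)
    (brL : L -> L -> L) (brM : M -> M -> M) (f : L -> M) :
  lin f -> (forall x y, f (brL x y) = brM (f x) (f y)) ->
  forall x, in_derived brL x -> in_derived brM (f x).
Proof.
move=> /lin_lfun [h ->] h_br x [s xs]; exists [seq (h p.1, h p.2) | p <- s].
have -> : [seq brM p.1 p.2 | p <- [seq (h p.1, h p.2) | p <- s]]
          = map h [seq brL p.1 p.2 | p <- s].
  by rewrite -!map_comp; apply: eq_map => p /=; rewrite h_br.
by rewrite -limg_span memv_img.
Qed.

Lemma ls_isomorphic_isoclinic (F : fieldType) (L K : vectType F)
    (gL : bool -> {vspace L}) (brL : L -> L -> L)
    (gK : bool -> {vspace K}) (brK : K -> K -> K) :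
  lie_superalgebra gK brK ->
  ls_isomorphic gL brL gK brK -> isoclinic gL brL gK brK.
Proof.
move=> hK [f [linf [finv fK Kf] f_even f_br]].
have [h hE] := lin_lfun linf; subst f.
have h_inj : injective h := can_inj fK.
have lin_finv : lin finv.
  by move=> a x y; apply: h_inj; rewrite linearP /= !Kf.
have finv_br x y : finv (brK x y) = brL (finv x) (finv y).
  by apply: h_inj; rewrite f_br !Kf.
have cK0 := central0 hK.
exists h, h; split.
- split=> // x; split=> cx y; first by apply: h_inj; rewrite f_br cx linear0.
  by rewrite -(Kf y) -f_br cx linear0.
- split=> [m | b x xb]; first by exists (finv m); rewrite Kf subrr.
  by exists 0; rewrite subr0 f_even.
- split=> [x y | ]; first by rewrite f_br subrr.
  split=> //; first exact: in_derived_morph.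
  + by move=> x _ hx0; apply: h_inj; rewrite hx0 linear0.
  + move=> m dm; exists (finv m); rewrite Kf; split=> //.
    exact: in_derived_morph lin_finv finv_br _ dm.
- by split=> [b x _ | x y _ _]; [apply: f_even | apply: f_br].
- move=> l m k r kl rm; rewrite f_br -[k](subrK (h l)) -[r](subrK (h m)).
  by rewrite (brDl hK) kl add0r (brDr hK) (br_centralr hK _ rm) add0r.
Qed.

Section Isoclinism.
Variables (F : fieldType) (L K : vectType F).
Variables (gL : bool -> {vspace L}) (brL : L -> L -> L).
Variables (gK : bool -> {vspace K}) (brK : K -> K -> K).
Hypotheses (hL : lie_superalgebra gL brL) (hK : lie_superalgebra gK brK).
Hypothesis hdim : forall b, \dim (gL b) = \dim (gK b).

(* [ZL], [ZK] are the centres and [DL], [DK] the derived superalgebras; [ZL] and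
   [DK] are only ever used through [phi_center] and the hypotheses on [theta]. *)
Variables (ZL DL : {vspace L}) (ZK DK : {vspace K}).
Hypothesis ZKP : forall z, z \in ZK <-> in_center brK z.
Hypothesis DLP : forall x, x \in DL <-> in_derived brL x.

Variables phi theta : 'Hom(L, K).
Hypothesis phi_center : forall x, (phi x \in ZK) = (x \in ZL).
Hypothesis phi_surj : forall m, exists x, m - phi x \in ZK.
Hypothesis phi_even :
  forall b x, x \in gL b -> exists2 z, z \in ZK & phi x - z \in gK b.
Hypothesis phi_br : forall x y, phi (brL x y) - brK (phi x) (phi y) \in ZK.
Hypothesis theta_derived : {in DL, forall x, theta x \in DK}.
Hypothesis theta_inj : {in DL, forall x, theta x = 0 -> x = 0}.
Hypothesis theta_surj : {in DK, forall m, exists2 x, x \in DL & theta x = m}.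
Hypothesis theta_even : forall b x, x \in DL -> x \in gL b -> theta x \in gK b.
Hypothesis theta_phi_br : forall l m k r,
  k - phi l \in ZK -> r - phi m \in ZK -> theta (brL l m) = brK k r.

Lemma gproj_centerv b z : z \in ZK -> gproj gK b z \in ZK.
Proof. by move=> /ZKP zc; apply/ZKP/central_gproj. Qed.

Lemma gproj_derivedv b x : x \in DL -> gproj gL b x \in DL.
Proof. by move=> /DLP xd; apply/DLP/derived_gproj. Qed.

Lemma theta_sub_phi_derived : {in DL, forall x, theta x - phi x \in ZK}.
Proof.
move=> x /DLP [s xs]; suff : x \in ((theta - phi) @^-1: ZK)%VS.
  by rewrite -memv_preim add_lfunE opp_lfunE.
move: x xs; apply/subvP/span_subvP => _ /mapP [[u v] _ ->] /=.
rewrite -memv_preim add_lfunE opp_lfunE (theta_phi_br (k := phi u) (r := phi v)).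
  by rewrite -opprB memvN.
all: by rewrite subrr mem0v.
Qed.

Lemma gproj_phi_centerv b x : x \in gL b -> gproj gK (~~ b) (phi x) \in ZK.
Proof.
move=> xb; have [z zZ xz] := phi_even xb.
rewrite -[phi x](subrK z) linearD /= (gproj_eq0 hK (b := ~~ b)) ?negbK // add0r.
exact: gproj_centerv.
Qed.

Section Parity.
Variable b : bool.

Local Notation ZLb := (ZL :&: gL b)%VS.
Local Notation DLb := (DL :&: gL b)%VS.
Local Notation ZKb := (ZK :&: gK b)%VS.
Local Notation psi := (gproj gK b \o phi)%VF.

Lemma psi_sub_phi x : x \in gL b -> psi x - phi x \in ZK.
Proof.
move=> xb; rewrite comp_lfunE -{2}(gproj_add hK b (phi x)) opprD addrA subrr add0r.
by rewrite memvN gproj_phi_centerv.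
Qed.

Lemma theta_gproj x : x \in DL -> theta (gproj gL b x) = gproj gK b (theta x).
Proof.
move=> xD; have thb := theta_even (gproj_derivedv b xD) (gproj_mem gL b x).
have thb' := theta_even (gproj_derivedv (~~ b) xD) (gproj_mem gL (~~ b) x).
rewrite -{2}(gproj_add hL b x) !linearD /=.
by rewrite (gproj_id hK thb) (gproj_eq0 hK thb') addr0.
Qed.

Lemma grade_subv_psi_centerv : (gK b <= psi @: gL b + ZKb)%VS.
Proof.
apply/subvP => m mb; have [x mx] := phi_surj m.
set xb := gproj gL b x.
have -> : m = psi xb + (m - psi xb) by rewrite addrC subrK.
apply: memv_add; first exact/memv_img/gproj_mem.
have -> : m - psi xb = gproj gK b (m - phi x) + gproj gK b (phi (gproj gL (~~ b) x)).
  rewrite comp_lfunE -linearD /= -{1}(gproj_add hL b x) [phi (_ + _)]linearD /=.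
  rewrite opprD addrA subrK.
  by rewrite linearB /= (gproj_id hK mb).
have xb'Z : gproj gK b (phi (gproj gL (~~ b) x)) \in ZK.
  by rewrite -{1}[b]negbK gproj_phi_centerv ?gproj_mem.
rewrite memv_cap; apply/andP; split; apply: memvD; rewrite ?gproj_mem //.
exact: gproj_centerv.
Qed.

Lemma dimv_centerv_le : (\dim ZLb <= \dim ZKb)%N.
Proof.
have psiZ : (psi @: ZLb <= ZKb)%VS.
  apply/subvP => _ /memv_imgP [z /memv_capP [zZ _] ->].
  by rewrite comp_lfunE memv_cap gproj_mem andbT gproj_centerv ?phi_center.
have := dimv_limg_add_le (capvSr ZL (gL b)) psiZ.
have := dimvS grade_subv_psi_centerv; have := hdim b; lia.
Qed.

Lemma centerv_derivedv_subv : (ZKb :&: DK <= theta @: (ZLb :&: DLb))%VS.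
Proof.
apply/subvP => m /memv_capP [/memv_capP [mZ mb] /theta_surj [x xD thx]].
have yD := gproj_derivedv b xD.
have thy : theta (gproj gL b x) = theta x.
  by rewrite theta_gproj // thx (gproj_id hK mb).
rewrite -thx -thy memv_img // !memv_cap gproj_mem yD !andbT -phi_center.
rewrite -[phi _](subKr (theta (gproj gL b x))); apply: memvB; first by rewrite thy thx.
exact: theta_sub_phi_derived.
Qed.

Lemma dimv_centerv_diff_le : (\dim (ZLb :\: DLb) <= \dim (ZKb :\: DK))%N.
Proof.
have := dimv_cap_compl ZLb DLb; have := dimv_cap_compl ZKb DK.
have := dimvS centerv_derivedv_subv; have := limg_ker_dim theta (ZLb :&: DLb).
have := dimv_centerv_le; lia.
Qed.

Lemma center_derived_lift : exists h : 'Hom(L, K),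
  [/\ {in DLb, h =1 theta},
      {in (ZLb + DLb)%VS, forall x, h x \in gK b},
      {in (ZLb + DLb)%VS, forall x, h x - phi x \in ZK} &
      {in (ZLb + DLb)%VS, forall x, h x = 0 -> x = 0}].
Proof.
have [g [gA gA0]] := exists_lfun_inj dimv_centerv_diff_le.
have gB a : a \in (ZLb :\: DLb)%VS -> g a \in (ZKb :\: DK)%VS.
  by move=> aA; apply/(subvP gA)/memv_img.
have [h [hD hA]] : exists h : 'Hom(L, K),
    {in DLb, h =1 theta} /\ {in (ZLb :\: DLb)%VS, h =1 g}.
  by apply: lfun_glue; rewrite capvC capv_diff.
have hS x : x \in (ZLb + DLb)%VS -> exists a d,
    [/\ a \in (ZLb :\: DLb)%VS, d \in DLb, x = a + d & h x = g a + theta d].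
  rewrite -addv_diff => /memv_addP [a aA [d dD ->]].
  by exists a, d; rewrite linearD /= hA ?hD.
exists h; split=> // x /hS [a [d [aA /memv_capP [dD db] -> ->]]].
- have /(subvP (diffvSl _ _)) /memv_capP [_ gab] := gB a aA.
  by rewrite memvD ?theta_even.
- have /(subvP (diffvSl _ _)) /memv_capP [gaZ _] := gB a aA.
  have /(subvP (diffvSl _ _)) /memv_capP [aZ _] := aA.
  rewrite linearD /= opprD addrACA memvD ?theta_sub_phi_derived //.
  by rewrite memvB // phi_center.
- move/eqP; rewrite addr_eq0 => /eqP thd.
  have thd0 : theta d = 0.
    apply/eqP; rewrite -memv0 -(capv_diff ZKb DK) memv_cap theta_derived //.
    by rewrite -[theta d]opprK -thd memvN gB.
  have ga0 : g a = 0 by rewrite thd thd0 oppr0.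
  have a0 : a = 0 by apply/eqP; rewrite -memv0 -gA0 memv_cap aA memv_ker ga0 eqxx.
  by rewrite a0 (theta_inj dD thd0) addr0.
Qed.

Lemma graded_lift : exists f : 'Hom(L, K),
  [/\ {in gL b, forall x, f x \in gK b},
      {in gL b, forall x, f x - phi x \in ZK},
      {in DLb, f =1 theta} &
      {in gL b, forall x, f x = 0 -> x = 0}].
Proof.
have [h [h_theta h_grade h_lift h_inj]] := center_derived_lift.
have SY : (ZLb + DLb <= gL b)%VS by rewrite subv_add !capvSr.
have [f [fW fS]] := lfun_glue psi h (capv_diff (gL b) (ZLb + DLb)).
have fY x : x \in gL b -> exists w s, [/\ w \in gL b, s \in (ZLb + DLb)%VS,
    x = w + s & f x = psi w + h s].
  rewrite -{1}(addv_idPl SY) -addv_diff => /memv_addP [w wW [s sS ->]].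
  exists w, s; split=> //; first exact: (subvP (diffvSl _ _) _ wW).
  by rewrite linearD /= fW ?fS.
have flift : {in gL b, forall x, f x - phi x \in ZK}.
  move=> _ /fY [w [s [wb sS -> ->]]].
  by rewrite linearD /= opprD addrACA memvD ?psi_sub_phi ?h_lift.
exists f; split=> //.
- move=> _ /fY [w [s [wb sS -> ->]]].
  by rewrite memvD ?h_grade // comp_lfunE gproj_mem.
- by move=> x xD; rewrite fS ?h_theta // (subvP (addvSr _ _)).
- move=> x xb fx0; have := flift x xb; rewrite fx0 sub0r memvN phi_center => xZ.
  have xS : x \in (ZLb + DLb)%VS by rewrite (subvP (addvSl _ _)) // memv_cap xZ.
  by apply: h_inj; rewrite // -fS.
Qed.

End Parity.

Lemma isoclinism_ls_isomorphic : ls_isomorphic gL brL gK brK.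
Proof.
have [f0 [f0K f0lift f0D f0inj]] := graded_lift false.
have [f1 [f1K f1lift f1D f1inj]] := graded_lift true.
have [f [ff0 ff1]] := lfun_glue f0 f1 (grade_cap hL false).
have fE x : f x = f0 (gproj gL false x) + f1 (gproj gL true x).
  by rewrite -{1}(gproj_add hL false x) linearD /= ff0 ?ff1 ?gproj_mem.
have flift x : f x - phi x \in ZK.
  rewrite fE -{3}(gproj_add hL false x) linearD /= opprD addrACA.
  by apply: memvD; [apply: f0lift | apply: f1lift]; apply: gproj_mem.
have fD : {in DL, f =1 theta}.
  move=> x xD; rewrite fE f0D ?f1D ?memv_cap ?gproj_mem ?gproj_derivedv //.
  by rewrite -linearD /= (gproj_add hL false).
have f_inj x : f x = 0 -> x = 0.
  move=> fx0; have x0b := gproj_mem gL false x; have x1b := gproj_mem gL true x.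
  have f0x0 : f0 (gproj gL false x) = 0.
    by apply: (grade_add_eq0 hK (f0K _ x0b) (f1K _ x1b)); rewrite -fE.
  have f1x0 : f1 (gproj gL true x) = 0 by rewrite -fx0 fE f0x0 add0r.
  by rewrite -(gproj_add hL false x) (f0inj _ x0b f0x0) (f1inj _ x1b f1x0) addr0.
exists f; split.
- exact: linearP.
- apply: lker0_bijective; first by rewrite (dimvf_grade hL) (dimvf_grade hK) !hdim.
  apply/lker0P => x y fxy; apply/eqP; rewrite -subr_eq0; apply/eqP/f_inj.
  by rewrite linearB /= fxy subrr.
- by case=> x xb; [rewrite ff1 ?f1K | rewrite ff0 ?f0K].
- move=> x y; rewrite fD; last by apply/DLP/derived_br.
  exact: theta_phi_br (flift x) (flift y).
Qed.

End Isoclinism.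

Lemma isoclinic_ls_isomorphic (F : fieldType) (L K : vectType F)
    (gL : bool -> {vspace L}) (brL : L -> L -> L)
    (gK : bool -> {vspace K}) (brK : K -> K -> K) :
  lie_superalgebra gL brL -> lie_superalgebra gK brK ->
  (forall b, \dim (gL b) = \dim (gK b)) ->
  isoclinic gL brL gK brK -> ls_isomorphic gL brL gK brK.
Proof.
move=> hL hK hdim [phi [theta [[linphi phiZ] [phi_surj phi_even]
  [phi_br [lintheta thetaD theta_inj theta_surj]] [theta_even _] theta_phi_br]]].
have [ph phE] := lin_lfun linphi; have [th thE] := lin_lfun lintheta; subst phi theta.
have [ZL ZLP] := vspace_of_pred (central0 hL) (central_lin hL).
have [ZK ZKP] := vspace_of_pred (central0 hK) (central_lin hK).
have [DL DLP] := vspace_of_pred (derived0 brL) (@derived_lin _ _ brL).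
have [DK DKP] := vspace_of_pred (derived0 brK) (@derived_lin _ _ brK).
apply: (isoclinism_ls_isomorphic hL hK hdim (ZL := ZL) (DK := DK) ZKP DLP
  (phi := ph) (theta := th)).
- by move=> x; apply/idP/idP => [/ZKP/phiZ/ZLP | /ZLP/phiZ/ZKP].
- by move=> m; have [x /ZKP] := phi_surj m; exists x.
- by move=> b x /phi_even [z [/ZKP]]; exists z.
- by move=> x y; apply/ZKP.
- by move=> x /DLP/thetaD/DKP.
- by move=> x /DLP; apply: theta_inj.
- by move=> m /DKP/theta_surj [x [/DLP]]; exists x.
- by move=> b x /DLP; apply: theta_even.
- by move=> l m k r /ZKP kl /ZKP rm; apply: theta_phi_br.
Qed.

Theorem theorem3p8 (F : fieldType)
    (hF2 : (2%N \notin [pchar F])%R) (hF3 : (3%N \notin [pchar F])%R)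
    (L K : vectType F)
    (gL : bool -> {vspace L}) (brL : L -> L -> L)
    (gK : bool -> {vspace K}) (brK : K -> K -> K)
    (hL : lie_superalgebra gL brL) (hK : lie_superalgebra gK brK)
    (hdim0 : \dim (gL false) = \dim (gK false))
    (hdim1 : \dim (gL true) = \dim (gK true)) :
  isoclinic gL brL gK brK <-> ls_isomorphic gL brL gK brK.
Proof.
have hdim : forall b, \dim (gL b) = \dim (gK b) by case.
split; [exact: isoclinic_ls_isomorphic | exact: ls_isomorphic_isoclinic].
Qed.
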